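(* Let $\mathcal H$ be a well-structured preconditioner set. The map $X\mapsto\operatorname{Tr}[P_{\mathcal H}(X)]$ is concave on $\mathcal S^d_{++}$.
   Context: $\mathcal S^d_+$ (resp. $\mathcal S^d_{++}$) denotes the set of real symmetric positive semidefinite (resp. positive definite) $d\times d$ matrices; $\langle A,B\rangle=\operatorname{Tr}(A^\top B)$. A set $\mathcal H\subseteq\mathcal S_+^d$ is a well-structured preconditioner set if $\mathcal H=\mathcal S_+^d\cap\mathcal K$ for some set $\mathcal K$ of real $d\times d$ matrices that is closed under scalar multiplication, matrix addition and matrix multiplication and contains the identity $I_d$. For $M\in\mathcal S^d_{++}$, $P_{\mathcal H}(M):=\arg\min_{H\in\mathcal H\cap\mathcal S^d_{++}}\langle M,H^{-1}\rangle+\operatorname{Tr}(H)$ (the minimizer exists and is unique). *)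

From mathcomp Require Import all_boot all_order all_algebra.
From mathcomp Require Import boolp classical_sets reals.
Set Implicit Arguments. Unset Strict Implicit. Unset Printing Implicit Defensive.
Import Order.TTheory GRing.Theory Num.Theory.
Local Open Scope ring_scope.
Local Open Scope classical_set_scope.

Section Defs.
Variables (R : realType) (d : nat).
Notation M := 'M[R]_d.

Definition symmx (A : M) : Prop := A^T = A.
Definition psdmx (A : M) : Prop :=
  symmx A /\ forall x : 'cV[R]_d, 0 <= (x^T *m A *m x) 0 0.
Definition pdmx (A : M) : Prop :=
  symmx A /\ forall x : 'cV[R]_d, x != 0 -> 0 < (x^T *m A *m x) 0 0.

Definition frob (A B : M) : R := \tr (A^T *m B).

Definition well_structured_K (K : set M) : Prop :=
  [/\ forall (a : R) A, K A -> K (a *: A),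
      forall A B, K A -> K B -> K (A + B),
      forall A B, K A -> K B -> K (A *m B)
    & K 1%:M].

Definition precond_set (K : set M) : set M := [set H | psdmx H /\ K H].

Definition precond_obj (X H : M) : R := frob X (invmx H) + \tr H.

Definition is_precond_min (K : set M) (X H : M) : Prop :=
  [/\ precond_set K H, pdmx H &
      forall H', precond_set K H' -> pdmx H' -> precond_obj X H <= precond_obj X H'].

(* P_H(X) := argmin (chosen by classical choice; the minimizer exists and is unique) *)
Definition P_H (K : set M) (X : M) : M := xget 0 (is_precond_min K X).

End Defs.

(* For X > 0 the objective f_X(H) = <X, H^-1> + Tr H has a minimizer on the
   feasible cone: K is a linear subspace of matrices, hence closed, and
   f_X(H) <= f_X(1) bounds the entries of H by f_X(1) and forces H >= e I for
   some e > 0 depending only on X, so the minimum is attained on a compact set.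
   Since the feasible set is a cone, c = 1 minimizes c |-> f_X(c H) =
   <X, H^-1> / c + c Tr H at a minimizer H, which forces <X, H^-1> = Tr H, so the
   optimal value is 2 Tr P_H(X).  As f_X(H) is affine in X, this optimal value is
   an infimum of affine functions of X, hence concave. *)

From mathcomp Require Import all_boot all_order all_algebra.
From mathcomp Require Import boolp classical_sets reals.
From mathcomp Require Import topology normedtype derive.
From mathcomp Require Import ring lra.
Set Implicit Arguments. Unset Strict Implicit. Unset Printing Implicit Defensive.
Import Order.TTheory GRing.Theory Num.Theory.
Import numFieldTopology.Exports numFieldNormedType.Exports.
Local Open Scope classical_set_scope.
Local Open Scope ring_scope.

Section QuadraticForms.
Variable R : realType.
Implicit Types (a b c : R) (n : nat).

Definition qform n (A : 'M[R]_n) (x : 'cV_n) : R := (x^T *m A *m x) 0 0.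
Definition bform n (A : 'M[R]_n) (x y : 'cV_n) : R := (x^T *m A *m y) 0 0.

Lemma nonneg_quadratic_discr a b c : 0 <= a ->
  (forall t, 0 <= a * t ^+ 2 + 2 * b * t + c) -> b ^+ 2 <= a * c.
Proof.
move=> a_ge0 q_ge0; have [a_gt0|a_le0] := ltrP 0 a.
  have := q_ge0 (- b / a).
  have -> : a * (- b / a) ^+ 2 + 2 * b * (- b / a) + c = (a * c - b ^+ 2) / a.
    by field; rewrite gt_eqF.
  by rewrite pmulr_lge0 ?invr_gt0 // subr_ge0.
have a0 : a = 0 by apply/eqP; rewrite eq_le a_le0 a_ge0.
rewrite {}a0 mul0r in q_ge0 *; have [->|b_neq0] := eqVneq b 0; first by rewrite expr0n.
(* a linear function [2 b t + c] cannot stay nonnegative *)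
have := q_ge0 (- (c + 1) / (2 * b)); rewrite mul0r add0r.
have -> : 2 * b * (- (c + 1) / (2 * b)) + c = -1.
  by field; rewrite ?mulf_neq0 ?pnatr_eq0 ?b_neq0.
by rewrite oppr_ge0 ler10.
Qed.

Lemma bform_sym n (A : 'M[R]_n) x y : A^T = A -> bform A x y = bform A y x.
Proof.
move=> sA; rewrite /bform -[LHS]trace_mx11 -mxtrace_tr.
by rewrite !trmx_mul trmxK sA mulmxA trace_mx11.
Qed.

Lemma qformDZ n (A : 'M[R]_n) x y t : A^T = A ->
  qform A (x + t *: y) = qform A x + 2 * t * bform A x y + t ^+ 2 * qform A y.
Proof.
move=> sA; have := bform_sym x y sA.
rewrite /qform /bform [(x + _)^T]linearD /= [(t *: y)^T]linearZ /=.
rewrite !mulmxDl !mulmxDr -!scalemxAl -!scalemxAr !mxE => ->; ring.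
Qed.

Lemma qformZ n (A : 'M[R]_n) c x : qform (c *: A) x = c * qform A x.
Proof. by rewrite /qform -scalemxAr -scalemxAl mxE. Qed.

Lemma qformD n (A B : 'M[R]_n) x : qform (A + B) x = qform A x + qform B x.
Proof. by rewrite /qform mulmxDr mulmxDl mxE. Qed.

Lemma psd_cauchy_schwarz n (A : 'M[R]_n) x y :
  psdmx A -> bform A x y ^+ 2 <= qform A x * qform A y.
Proof.
case=> sA A_ge0; rewrite mulrC; apply: nonneg_quadratic_discr; first exact: A_ge0.
move=> t; have := A_ge0 (x + t *: y); rewrite -/(qform _ _) qformDZ //.
by congr (_ <= _); ring.
Qed.

Lemma qform_block n a (r : 'rV[R]_n) (D : 'M[R]_n) t (y : 'cV[R]_n) :
  qform (block_mx a%:M r r^T D) (col_mx t%:M y) =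
  t ^+ 2 * a + 2 * t * (r *m y) 0 0 + qform D y.
Proof.
rewrite /qform tr_col_mx tr_scalar_mx mul_row_block mul_row_col.
rewrite !mulmxDl -trmx_mul -scalar_mxM !mul_mx_scalar !mul_scalar_mx -scalemxAl.
set u := y^T *m D *m y; set w := r *m y; clearbody u w.
rewrite !mxE eqxx /= mulr1n; ring.
Qed.

Lemma symmx_block n (A : 'M[R]_(1 + n)) : symmx A ->
  A = block_mx (A 0 0)%:M (ursubmx A) (ursubmx A)^T (drsubmx A).
Proof.
move=> sA; rewrite -[X in X = _]submxK trmx_ursub sA; congr block_mx.
by rewrite [LHS]mx11_scalar !mxE; congr (A _ _)%:M; apply/val_inj.
Qed.

Section PsdBlock.
Variables (n : nat) (a : R) (r : 'rV[R]_n) (D : 'M[R]_n).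
Hypothesis psdA : psdmx (block_mx a%:M r r^T D).

Lemma psd_block_qform t y : 0 <= t ^+ 2 * a + 2 * t * (r *m y) 0 0 + qform D y.
Proof. by rewrite -qform_block; apply: psdA.2. Qed.

Lemma psd_block_lead_ge0 : 0 <= a.
Proof. by have := psd_block_qform 1 0; rewrite mulmx0 /qform !mulmx0 !mxE; lra. Qed.

Lemma psd_block_drsub : psdmx D.
Proof.
split; first by have := congr1 drsubmx psdA.1; rewrite -trmx_drsub !block_mxKdr.
move=> y; have := psd_block_qform 0 y.
by rewrite expr0n /= !(mul0r, mulr0, add0r).
Qed.

Lemma psd_block_lead0 : a = 0 -> r = 0.
Proof.
move=> a0; have ry (y : 'cV_n) : (r *m y) 0 0 = 0.
  have : ((r *m y) 0 0) ^+ 2 <= 0 * qform D y.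
    apply: nonneg_quadratic_discr => // t; have := psd_block_qform t y.
    by rewrite a0 !mul0r mulr0 !add0r (mulrAC 2 ((r *m y) 0 0) t).
  by rewrite mul0r => h; apply/eqP; rewrite -sqrf_eq0 eq_le h sqr_ge0.
apply/matrixP => i j; rewrite (ord1 i) mxE.
by have := ry (delta_mx j 0); rewrite -colE mxE.
Qed.

Lemma psd_block_schur : 0 < a -> psdmx (D - a^-1 *: (r^T *m r)).
Proof.
move=> a_gt0; have [sD D_ge0] := psd_block_drsub; split.
  by rewrite /symmx linearB /= linearZ /= trmx_mul trmxK sD.
move=> y; rewrite -/(qform _ _).
have -> : qform (D - a^-1 *: (r^T *m r)) y = qform D y - a^-1 * ((r *m y) 0 0) ^+ 2.
  rewrite -scaleNr qformD qformZ mulNr; congr (_ - _ * _).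
  by rewrite /qform mulmxA -trmx_mul -mulmxA mxE big_ord1 mxE expr2.
have := psd_block_qform (- (r *m y) 0 0 / a) y; set b := (r *m y) 0 0.
have -> : (- b / a) ^+ 2 * a + 2 * (- b / a) * b = - (a^-1 * b ^+ 2).
  by field; rewrite gt_eqF.
lra.
Qed.

End PsdBlock.

Lemma psd_gram n (A : 'M[R]_n) : psdmx A -> exists m (M : 'M[R]_(m, n)), A = M^T *m M.
Proof.
elim: n A => [|n IH] A psdA; first by exists 0%N, 0; apply/matrixP => -[].
change (exists m (M : 'M[R]_(m, 1 + n)), (A : 'M_(1 + n)) = M^T *m M).
have eA := @symmx_block n A psdA.1; move: psdA; rewrite {}eA.
set a := A 0 0; set r := ursubmx (A : 'M_(1 + n)); set D := drsubmx (A : 'M_(1 + n)).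
clearbody a r D => psdA.
have a_ge0 := psd_block_lead_ge0 psdA.
have [a_gt0|a_le0] := ltrP 0 a; last first.
  have a0 : a = 0 by apply/eqP; rewrite eq_le a_le0 a_ge0.
  have [m [N ->]] := IH _ (psd_block_drsub psdA).
  exists m, (row_mx 0 N); rewrite tr_row_mx mul_col_row a0 (psd_block_lead0 psdA a0).
  by rewrite !trmx0 !mul0mx !mulmx0 raddf0.
(* Cholesky step: peel off the first row [sqrt a, r / sqrt a] *)
have [m [N eN]] := IH _ (psd_block_schur psdA a_gt0).
pose s := Num.sqrt a; have s2 : s ^+ 2 = a by rewrite sqr_sqrtr.
have s_neq0 : s != 0 by rewrite sqrtr_eq0 -ltNge.
exists (1 + m)%N, (col_mx (row_mx s%:M (s^-1 *: r)) (row_mx 0 N)).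
rewrite tr_col_mx mul_row_col !tr_row_mx !mul_col_row -eN.
rewrite add_block_mx tr_scalar_mx !linearZ /= trmx0 !mulmx0 mul0mx !addr0.
congr block_mx.
- by rewrite -scalar_mxM -expr2 s2.
- by rewrite mul_scalar_mx scalerA mulVf // scale1r.
- by rewrite mul_mx_scalar scalerA divff // scale1r.
- by rewrite -scalemxAl scalerA -expr2 exprVn s2 scalerN addrC subrK.
Qed.

Lemma qform1 n (x : 'cV[R]_n) : qform 1%:M x = \sum_i x i 0 ^+ 2.
Proof. by rewrite /qform mulmx1 mxE; apply: eq_bigr => i _; rewrite mxE expr2. Qed.

Lemma qform1_ge0 n (x : 'cV[R]_n) : 0 <= qform 1%:M x.
Proof. by rewrite qform1 sumr_ge0 // => i _; rewrite sqr_ge0. Qed.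

Lemma qform1_gt0 n (x : 'cV[R]_n) : x != 0 -> 0 < qform 1%:M x.
Proof.
move=> x_neq0; have [i xi_neq0] : exists i, x i 0 != 0.
  apply/existsP; move: x_neq0; apply: contraR; rewrite negb_exists => /forallP x0.
  by apply/eqP/matrixP => i j; rewrite (ord1 j) mxE; exact/eqP/negPn/x0.
rewrite qform1 (bigD1 i) //= (@lt_le_trans _ _ (x i 0 ^+ 2)) //.
  by rewrite lt_def sqr_ge0 sqrf_eq0 xi_neq0.
by rewrite lerDl sumr_ge0 // => k _; rewrite sqr_ge0.
Qed.

Lemma pdmx1 n : pdmx (1%:M : 'M[R]_n).
Proof. by split=> [|x]; [exact: trmx1 | exact: qform1_gt0]. Qed.

Lemma pdmx_psd n (A : 'M[R]_n) : pdmx A -> psdmx A.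
Proof.
case=> sA A_gt0; split=> // x; have [->|x_neq0] := eqVneq x 0.
  by rewrite mulmx0 mxE.
exact/ltW/A_gt0.
Qed.

Lemma sum_cauchy_schwarz n (u v : 'I_n -> R) :
  (\sum_i u i * v i) ^+ 2 <= (\sum_i u i ^+ 2) * (\sum_i v i ^+ 2).
Proof.
have := psd_cauchy_schwarz (\col_i u i) (\col_i v i) (pdmx_psd (pdmx1 n)).
rewrite !qform1 /bform mulmx1 mxE.
under eq_bigr do rewrite !mxE; under [X in _ <= X * _]eq_bigr do rewrite mxE.
by under [X in _ <= _ * X]eq_bigr do rewrite mxE.
Qed.

Lemma qform_gram m n (M : 'M[R]_(m, n)) x : qform (M^T *m M) x = qform 1%:M (M *m x).
Proof. by rewrite /qform mulmx1 mulmxA -trmx_mul -mulmxA. Qed.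

Lemma mxtrace_gram m n (M : 'M[R]_(m, n)) : \tr (M^T *m M) = \sum_k \sum_j M k j ^+ 2.
Proof.
rewrite mxtrace_mulC; apply: eq_bigr => k _; rewrite mxE.
by apply: eq_bigr => j _; rewrite mxE expr2.
Qed.

Lemma qform_gram_le m n (M : 'M[R]_(m, n)) x :
  qform (M^T *m M) x <= \tr (M^T *m M) * qform 1%:M x.
Proof.
rewrite qform_gram !qform1 mxtrace_gram mulr_suml; apply: ler_sum => k _.
by rewrite mxE; exact: sum_cauchy_schwarz.
Qed.

Lemma mxtrace_psd_gram_ge0 m n (A : 'M[R]_n) (M : 'M[R]_(m, n)) :
  psdmx A -> 0 <= \tr (A *m (M^T *m M)).
Proof.
case=> _ A_ge0; rewrite mulmxA mxtrace_mulC mulmxA sumr_ge0 // => k _.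
have := A_ge0 (row k M)^T; rewrite trmxK; congr (_ <= _).
rewrite !mxE; apply: eq_bigr => j _; rewrite !mxE; congr (_ * _).
by apply: eq_bigr => i _; rewrite !mxE.
Qed.

Lemma frob_psd_ge0 n (A B : 'M[R]_n) : psdmx A -> psdmx B -> 0 <= frob A B.
Proof. by move=> psdA /psd_gram[m [M ->]]; rewrite /frob psdA.1; exact: mxtrace_psd_gram_ge0. Qed.

Lemma frob_combl n (A B C : 'M[R]_n) t :
  frob (t *: A + (1 - t) *: B) C = t * frob A C + (1 - t) * frob B C.
Proof. by rewrite /frob linearD !linearZ /= mulmxDl -!scalemxAl mxtraceD !mxtraceZ. Qed.

Lemma pdmx_unit n (A : 'M[R]_n) : pdmx A -> A \in unitmx.
Proof.
case=> _ A_gt0; rewrite -row_free_unit -kermx_eq0; apply: contraT => kerA_neq0.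
have [i ki_neq0] : exists i, row i (kermx A) != 0.
  apply/existsP; move: kerA_neq0; apply: contraR; rewrite negb_exists => /forallP k0.
  by apply/eqP/row_matrixP => i; rewrite row0; exact/eqP/negPn/k0.
have := A_gt0 (row i (kermx A))^T; rewrite trmx_eq0 ki_neq0 trmxK.
by rewrite -row_mul mulmx_ker row0 mul0mx mxE ltxx => /(_ isT).
Qed.

Lemma pdmx_inv n (A : 'M[R]_n) : pdmx A -> pdmx (invmx A).
Proof.
move=> pdA; have uA := pdmx_unit pdA; case: pdA => sA A_gt0.
have sAi : (invmx A)^T = invmx A by rewrite trmx_inv sA.
split=> // x x_neq0.
have -> : x^T *m invmx A *m x = (invmx A *m x)^T *m A *m (invmx A *m x).
  by rewrite trmx_mul sAi -!mulmxA (mulmxA A) mulmxV // mul1mx.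
apply: A_gt0; apply: contra x_neq0 => /eqP Aix0.
by rewrite -(mulKVmx uA x) Aix0 mulmx0.
Qed.

Lemma pdmx_cauchy_schwarz_inv n (A : 'M[R]_n) x : pdmx A ->
  qform 1%:M x ^+ 2 <= qform (invmx A) x * qform A x.
Proof.
move=> pdA; have uA := pdmx_unit pdA.
have := psd_cauchy_schwarz x (A *m x) (pdmx_psd (pdmx_inv pdA)).
rewrite /bform /qform mulmx1 -mulmxA (mulmxA (invmx A)) mulVmx // mul1mx.
by rewrite trmx_mul pdA.1 -!mulmxA (mulmxA (invmx A)) mulVmx // mul1mx.
Qed.

Lemma bform_delta n (A : 'M[R]_n) i j : bform A (delta_mx i 0) (delta_mx j 0) = A i j.
Proof. by rewrite /bform trmx_delta -rowE -colE !mxE. Qed.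

Lemma psd_diag_ge0 n (A : 'M[R]_n) i : psdmx A -> 0 <= A i i.
Proof. by case=> _ A_ge0; rewrite -bform_delta; exact: A_ge0. Qed.

Lemma mxtrace_psd_ge0 n (A : 'M[R]_n) : psdmx A -> 0 <= \tr A.
Proof. by move=> psdA; apply: sumr_ge0 => i _; exact: psd_diag_ge0. Qed.

Lemma psd_diag_le_mxtrace n (A : 'M[R]_n) i : psdmx A -> A i i <= \tr A.
Proof.
move=> psdA; rewrite /mxtrace (bigD1 i) //= lerDl sumr_ge0 // => k _.
exact: psd_diag_ge0.
Qed.

Lemma psd_entry_le_mxtrace n (A : 'M[R]_n) i j : psdmx A -> `|A i j| <= \tr A.
Proof.
move=> psdA; have := psd_cauchy_schwarz (delta_mx i 0) (delta_mx j 0) psdA.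
rewrite /qform -!/(bform _ _ _) !bform_delta => Aij2_le.
have tr_ge0 := mxtrace_psd_ge0 psdA.
rewrite -(ger0_norm tr_ge0) -ler_sqr ?nnegrE // real_normK ?num_real //.
apply: le_trans Aij2_le _; rewrite expr2 ger0_norm //.
by rewrite ler_pM ?psd_diag_ge0 ?psd_diag_le_mxtrace.
Qed.

Lemma pdmxZ n (A : 'M[R]_n) c : pdmx A -> 0 < c -> pdmx (c *: A).
Proof.
case=> sA A_gt0 c_gt0; split; first by rewrite /symmx linearZ /= sA.
by move=> x x_neq0; rewrite -/(qform _ _) qformZ mulr_gt0 //; exact: A_gt0.
Qed.

Lemma pdmx_convex n (A B : 'M[R]_n) t : pdmx A -> pdmx B -> 0 <= t -> t <= 1 ->
  pdmx (t *: A + (1 - t) *: B).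
Proof.
case=> sA A_gt0 [sB B_gt0] t_ge0 t_le1; split.
  by rewrite /symmx linearD !linearZ /= sA sB.
move=> x x_neq0; rewrite -/(qform _ _) qformD !qformZ.
by have := A_gt0 x x_neq0; have := B_gt0 x x_neq0; rewrite -!/(qform _ _); nra.
Qed.

Lemma psdmx_gram m n (M : 'M[R]_(m, n)) : psdmx (M^T *m M).
Proof.
split=> [|x]; first by rewrite /symmx trmx_mul trmxK.
by rewrite -/(qform _ _) qform_gram qform1_ge0.
Qed.

Lemma pdmx_lower_bound n (A : 'M[R]_n) : pdmx A ->
  exists2 e, 0 < e & forall x, e * qform 1%:M x <= qform A x.
Proof.
move=> pdA; have [m [M eA]] := psd_gram (pdmx_psd pdA).
(* [N] is a left inverse of the Gram factor [M], so [|x|^2 <= Tr (N^T N) x^T A x] *)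
pose N := invmx A *m M^T.
have NM : N *m M = 1%:M by rewrite -mulmxA -eA mulVmx ?pdmx_unit.
pose T := \tr (N^T *m N); have T_ge0 : 0 <= T := mxtrace_psd_ge0 (psdmx_gram N).
exists (1 + T)^-1 => [|x]; first by rewrite invr_gt0; lra.
have := qform_gram_le N (M *m x).
rewrite !qform_gram mulmxA NM mul1mx -/T -qform_gram -eA => x_le.
have A_ge0 : 0 <= qform A x by rewrite eA qform_gram qform1_ge0.
by rewrite mulrC ler_pdivrMr; nra.
Qed.

End QuadraticForms.

Section Coercivity.
Variables (R : realType) (n : nat) (X H : 'M[R]_n) (e C : R).
Hypotheses (pdX : pdmx X) (e_gt0 : 0 < e).
Hypothesis X_ge : forall x, e * qform 1%:M x <= qform X x.
Hypotheses (pdH : pdmx H) (objH_le : precond_obj X H <= C).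

Let frob_ge0 : 0 <= frob X (invmx H).
Proof. by apply: frob_psd_ge0; apply: pdmx_psd => //; exact: pdmx_inv. Qed.

Let trH_ge0 : 0 <= \tr H. Proof. exact/mxtrace_psd_ge0/pdmx_psd. Qed.

Let trH_le : \tr H <= C. Proof. by move: objH_le frob_ge0; rewrite /precond_obj; lra. Qed.

Let frob_le : frob X (invmx H) <= C.
Proof. by move: objH_le trH_ge0; rewrite /precond_obj; lra. Qed.

Let trHi_le : e * \tr (invmx H) <= C.
Proof.
have [m [M eHi]] := psd_gram (pdmx_psd (pdmx_inv pdH)).
have psdXe : psdmx (X - e *: 1%:M).
  split=> [|y]; first by rewrite /symmx linearB linearZ /= trmx1 pdX.1.
  by rewrite -/(qform _ _) -scaleNr qformD qformZ mulNr subr_ge0; exact: X_ge.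
have := mxtrace_psd_gram_ge0 M psdXe; rewrite -eHi mulmxBl -scalemxAl mul1mx.
rewrite linearB /= mxtraceZ subr_ge0 -pdX.1 -/(frob _ _).
by move=> le_frob; exact: le_trans le_frob frob_le.
Qed.

Lemma precond_obj_le_entry i j : `|H i j| <= C.
Proof. exact: le_trans (psd_entry_le_mxtrace i j (pdmx_psd pdH)) trH_le. Qed.

Lemma precond_obj_le_lower x : e / (C + 1) * qform 1%:M x <= qform H x.
Proof.
have [m [M eHi]] := psd_gram (pdmx_psd (pdmx_inv pdH)).
have := pdmx_cauchy_schwarz_inv x pdH.
have := qform_gram_le M x; rewrite -eHi.
have := qform1_ge0 x; have := (pdmx_psd pdH).2 x; rewrite -/(qform _ _).
have := mxtrace_psd_ge0 (pdmx_psd (pdmx_inv pdH)); have := trHi_le.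
set a := qform 1%:M x; set h := qform H x; set g := qform (invmx H) x.
set t := \tr (invmx H) => et_le t_ge0 h_ge0 a_ge0 g_le ah.
have C_ge0 : 0 <= C := le_trans trH_ge0 trH_le.
(* [|x|^4 <= g h <= t |x|^2 h], so [e |x|^2 <= e t h <= C h] *)
have eah : e * a <= C * h.
  have [a_gt0|a_le0] := ltrP 0 a; last first.
    have -> : a = 0 by apply/eqP; rewrite eq_le a_le0 a_ge0.
    by rewrite mulr0 mulr_ge0.
  have a_le : a <= t * h by rewrite -(ler_pM2l a_gt0); nra.
  apply: (le_trans (y := e * (t * h))); first by rewrite ler_pM2l.
  by rewrite mulrA ler_wpM2r.
by rewrite mulrAC ler_pdivrMr; nra.
Qed.

End Coercivity.

Lemma scale_invariant_min_eq (R : realType) (a b : R) : 0 <= a -> 0 <= b ->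
  (forall c, 0 < c -> a + b <= c^-1 * a + c * b) -> a = b.
Proof.
move=> a_ge0 b_ge0 le_ab; have [b_gt0|b_le0] := ltrP 0 b; last first.
  have b0 : b = 0 by apply/eqP; rewrite eq_le b_le0 b_ge0.
  by have := le_ab 2 (ltr0n _ 2); rewrite b0 mulr0 !addr0; lra.
(* at [c = (a + b) / 2b] the hypothesis reads [(a - b)^2 <= 0] *)
have ab_gt0 : 0 < a + b by lra.
have := le_ab ((a + b) / (2 * b)); rewrite divr_gt0 ?mulr_gt0 // => /(_ isT).
rewrite -(ler_pM2r ab_gt0) invf_div.
have -> : (2 * b / (a + b) * a + (a + b) / (2 * b) * b) * (a + b) =
          2 * a * b + (a + b) ^+ 2 / 2.
  by field; rewrite !gt_eqF.
move=> le_sq; have : (a - b) ^+ 2 <= 0 by nra.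
by rewrite le_eqVlt ltNge sqr_ge0 orbF sqrf_eq0 subr_eq0 => /eqP.
Qed.

Lemma precond_obj_combl (R : realType) n (X Y H : 'M[R]_n) t :
  precond_obj (t *: X + (1 - t) *: Y) H =
  t * precond_obj X H + (1 - t) * precond_obj Y H.
Proof. by rewrite /precond_obj frob_combl; ring. Qed.

Section PrecondMin.
Variables (R : realType) (n : nat) (K : set 'M[R]_n).
Hypothesis K_scale : forall (a : R) A, K A -> K (a *: A).

Lemma precond_setZ (H : 'M[R]_n) c : precond_set K H -> pdmx H -> 0 < c ->
  precond_set K (c *: H).
Proof. by move=> [_ KH] pdH c_gt0; split; [exact/pdmx_psd/pdmxZ | exact: K_scale]. Qed.

Lemma precond_objZ (X H : 'M[R]_n) c : H \in unitmx -> 0 < c ->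
  precond_obj X (c *: H) = c^-1 * frob X (invmx H) + c * \tr H.
Proof.
move=> uH c_gt0; rewrite /precond_obj invmxZ ?unitmxZ ?unitfE ?gt_eqF //.
by rewrite /frob -scalemxAr !mxtraceZ.
Qed.

Lemma precond_min_frob (X H : 'M[R]_n) : pdmx X -> is_precond_min K X H ->
  frob X (invmx H) = \tr H.
Proof.
move=> pdX [KH pdH minH]; apply: scale_invariant_min_eq.
- by apply: frob_psd_ge0; apply: pdmx_psd => //; exact: pdmx_inv.
- exact/mxtrace_psd_ge0/pdmx_psd.
move=> c c_gt0; have := minH _ (precond_setZ KH pdH c_gt0) (pdmxZ pdH c_gt0).
by rewrite precond_objZ ?pdmx_unit.
Qed.

Lemma precond_min_value (X H : 'M[R]_n) : pdmx X -> is_precond_min K X H ->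
  precond_obj X H = 2 * \tr H.
Proof. by move=> pdX minH; rewrite /precond_obj (precond_min_frob pdX minH); ring. Qed.

End PrecondMin.

Section MxContinuity.
Variables (R : realType) (T : topologicalType).
Implicit Types f g : T -> R.

Lemma continuous_subr f g : continuous f -> continuous g -> continuous (fun x => f x - g x).
Proof. by move=> cf cg x; apply: continuousB; [exact: cf | exact: cg]. Qed.

Lemma continuous_mulr f g : continuous f -> continuous g -> continuous (fun x => f x * g x).
Proof. by move=> cf cg x; apply: continuousM; [exact: cf | exact: cg]. Qed.

Lemma continuous_sumr (I : Type) (r : seq I) (P : pred I) (F : I -> T -> R) :
  (forall i, continuous (F i)) -> continuous (fun x => \sum_(i <- r | P i) F i x).
Proof. by move=> cF; apply: continuous_big => [|i _]; [exact: add_continuous | exact: cF]. Qed.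

Lemma continuous_prodr (I : Type) (r : seq I) (P : pred I) (F : I -> T -> R) :
  (forall i, continuous (F i)) -> continuous (fun x => \prod_(i <- r | P i) F i x).
Proof. by move=> cF; apply: continuous_big => [|i _]; [exact: mul_continuous | exact: cF]. Qed.

Definition mx_continuous m n (F : T -> 'M[R]_(m, n)) :=
  forall i j, continuous (fun x => F x i j).

Lemma mx_continuous_cst m n (A : 'M[R]_(m, n)) : mx_continuous (fun=> A).
Proof. by move=> i j; exact: cst_continuous. Qed.

Lemma mx_continuous_tr m n (F : T -> 'M[R]_(m, n)) :
  mx_continuous F -> mx_continuous (fun x => (F x)^T).
Proof. by move=> cF i j; under eq_fun do rewrite mxE; exact: cF. Qed.

Lemma mx_continuous_mul m n p (F : T -> 'M[R]_(m, n)) (G : T -> 'M[R]_(n, p)) :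
  mx_continuous F -> mx_continuous G -> mx_continuous (fun x => F x *m G x).
Proof.
move=> cF cG i j; under eq_fun do rewrite mxE.
by apply: continuous_sumr => k; apply: continuous_mulr; [exact: cF | exact: cG].
Qed.

Lemma continuous_mxtrace n (F : T -> 'M[R]_n) : mx_continuous F ->
  continuous (fun x => \tr (F x)).
Proof. by move=> cF; apply: continuous_sumr => i; exact: cF. Qed.

Lemma continuous_det n (F : T -> 'M[R]_n) : mx_continuous F ->
  continuous (fun x => \det (F x)).
Proof.
move=> cF; apply: continuous_sumr => s; apply: continuous_mulr.
  exact: cst_continuous.
by apply: continuous_prodr => i; exact: cF.
Qed.

Lemma mx_continuous_adj n (F : T -> 'M[R]_n) : mx_continuous F ->
  mx_continuous (fun x => \adj (F x)).
Proof.
move=> cF i j; under eq_fun do rewrite mxE /cofactor.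
apply: continuous_mulr; first exact: cst_continuous.
by apply: continuous_det => a b; under eq_fun do rewrite !mxE; exact: cF.
Qed.

Lemma continuous_qform n (F : T -> 'M[R]_n) x : mx_continuous F ->
  continuous (fun y => qform (F y) x).
Proof.
by move=> cF; apply: mx_continuous_mul; [apply: mx_continuous_mul|];
  rewrite //; exact: mx_continuous_cst.
Qed.

Lemma closed_le_fun f g : continuous f -> continuous g -> closed [set x | f x <= g x].
Proof.
move=> cf cg; rewrite (_ : [set x | _] = (fun x => g x - f x) @^-1` [set y | 0 <= y]).
  exact: (continuous_closedP _).1 (continuous_subr cg cf) _ (@closed_ge R 0).
by apply/seteqP; split => x /=; rewrite subr_ge0.
Qed.

Lemma closed_eq_fun f g : continuous f -> continuous g -> closed [set x | f x = g x].
Proof.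
move=> cf cg; rewrite (_ : [set x | _] = (fun x => f x - g x) @^-1` [set y | y = 0]).
  exact: (continuous_closedP _).1 (continuous_subr cf cg) _ (@closed_eq R 0).
by apply/seteqP; split => x /=; [move=> ->; exact: subrr | move/eqP; rewrite subr_eq0 => /eqP].
Qed.

Lemma closed_forall (I : Type) (P : I -> set T) :
  (forall i, closed (P i)) -> closed [set x | forall i, P i x].
Proof.
move=> cP; rewrite (_ : [set x | _] = \bigcap_(i in setT) P i); last first.
  by apply/seteqP; split => x /= Px i //; exact: Px.
by apply: closed_bigI => i _; exact: cP.
Qed.

Lemma closed_mx_eq m n (F G : T -> 'M[R]_(m, n)) :
  mx_continuous F -> mx_continuous G -> closed [set x | F x = G x].
Proof.
move=> cF cG; rewrite (_ : [set x | _] = [set x | forall i j, F x i j = G x i j]).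
  by apply: closed_forall => i; apply: closed_forall => j; exact: closed_eq_fun.
by apply/seteqP; split => x /=; [move=> -> | move=> FG; apply/matrixP].
Qed.

End MxContinuity.

Lemma subspace_mxvec_span (F : fieldType) m n (K : set 'M[F]_(m, n)) :
  K 0 -> (forall a A, K A -> K (a *: A)) -> (forall A B, K A -> K B -> K (A + B)) ->
  exists B : 'M[F]_(m * n), forall A, K A <-> (mxvec A <= B)%MS.
Proof.
move=> K0 KZ KD; pose spans (B : 'M[F]_(m * n)) := forall w, K (vec_mx (w *m B)).
(* a spanned subspace of maximal rank is all of [K] *)
pose P k := `[< exists B, \rank B = k /\ spans B >].
have P0 : exists k, P k.
  by exists 0%N; apply/asboolP; exists 0; rewrite mxrank0; split=> // w; rewrite mulmx0 linear0.
have P_le k : P k -> (k <= m * n)%N by move=> /asboolP [B [<- _]]; exact: rank_leq_col.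
have [k /asboolP [B [rB spB]] k_max] := ex_maxnP P0 P_le.
exists B => A; split=> [KA|/submxP [w eA]]; last by have := spB w; rewrite -eA mxvecK.
apply: contraT => A_notin; pose B' := (B + mxvec A)%MS.
have rB_lt : (\rank B < \rank B')%N.
  rewrite (ltn_leqif (mxrank_leqif_sup (addsmxSl _ _))).
  by apply: contra A_notin; exact: submx_trans (addsmxSr _ _).
have spB' : spans B'.
  move=> w; have /submxP [u ->] : (w *m B' <= col_mx B (mxvec A))%MS.
    by rewrite -addsmxE submxMl.
  rewrite -[u]hsubmxK mul_row_col linearD /=; apply: KD; first exact: spB.
  by rewrite [rsubmx u]mx11_scalar mul_scalar_mx linearZ /= mxvecK; exact: KZ.
have := k_max _ (asboolT (ex_intro _ B' (conj erefl spB'))).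
by rewrite -rB leqNgt rB_lt.
Qed.

Lemma mx_continuous_vec_mx (R : realType) m n :
  mx_continuous (fun v : 'rV[R]_(m * n) => vec_mx v).
Proof. by move=> i j; under eq_fun do rewrite mxE; exact: coord_continuous. Qed.

Lemma closed_submx (R : realType) k m (B : 'M[R]_(k, m)) :
  closed [set v : 'rV[R]_m | (v <= B)%MS].
Proof.
rewrite (_ : [set v | _] = [set v | v *m cokermx B = 0]).
  apply: closed_mx_eq; last exact: mx_continuous_cst.
  by apply: mx_continuous_mul; [move=> i j; exact: coord_continuous | exact: mx_continuous_cst].
by apply/seteqP; split => v /=; rewrite submxE => /eqP.
Qed.

Lemma precond_obj_adj (R : realType) n (X A : 'M[R]_n) : A \in unitmx ->
  precond_obj X A = (\det A)^-1 * \tr (X^T *m \adj A) + \tr A.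
Proof. by move=> uA; rewrite /precond_obj /frob /invmx uA -scalemxAr mxtraceZ. Qed.

Lemma precond_obj_adj_continuous_at (R : realType) (T : topologicalType) n
    (X : 'M[R]_n) (F : T -> 'M[R]_n) p :
  mx_continuous F -> F p \in unitmx ->
  {for p, continuous (fun x => (\det (F x))^-1 * \tr (X^T *m \adj (F x)) + \tr (F x))}.
Proof.
move=> cF uFp; apply: continuousD; last exact: continuous_mxtrace.
apply: continuousM; first by apply: continuousV; [rewrite -unitfE -unitmxE | exact: continuous_det].
by apply/continuous_mxtrace/mx_continuous_mul/mx_continuous_adj => //; exact: mx_continuous_cst.
Qed.

Section PrecondExists.
Variables (R : realType) (n : nat) (K : set 'M[R]_n) (X : 'M[R]_n) (e : R).
Variable B : 'M[R]_(n * n).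
Hypotheses (wsK : well_structured_K K) (KB : forall A, K A <-> (mxvec A <= B)%MS).
Hypotheses (pdX : pdmx X) (e_gt0 : 0 < e) (X_ge : forall x, e * qform 1%:M x <= qform X x).

Let C := precond_obj X 1%:M.

Let C_ge0 : 0 <= C.
Proof.
have psd1 := pdmx_psd (pdmx1 R n).
by rewrite addr_ge0 ?frob_psd_ge0 ?mxtrace_psd_ge0 ?invmx1 //; exact: pdmx_psd.
Qed.

(* A compact set of vectorized feasible points containing every feasible [H]
   with [f_X H <= f_X 1]: the bounds come from [precond_obj_le_entry] and
   [precond_obj_le_lower]. *)
Definition precond_sublevel : set 'rV[R]_(n * n) :=
  [set v : 'rV_(n * n) | forall i, `[- C, C]%classic (v ord0 i)] `&`
  [set v | [/\ (v <= B)%MS, symmx (vec_mx v) &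
            forall x, e / (C + 1) * qform 1%:M x <= qform (vec_mx v) x]].

Lemma precond_sublevel_compact : compact precond_sublevel.
Proof.
apply: compact_closedI.
  by apply: (@rV_compact _ _ (fun=> `[- C, C]%classic)) => _; exact: segment_compact.
rewrite (_ : [set v | _] = [set v | (v <= B)%MS] `&` [set v | (vec_mx v)^T = vec_mx v]
   `&` [set v | forall x, e / (C + 1) * qform 1%:M x <= qform (vec_mx v) x]); last first.
  by apply/seteqP; split=> v /=; [case | case=> -[]].
apply: closedI; first apply: closedI.
- exact: closed_submx.
- by apply: closed_mx_eq; [apply: mx_continuous_tr|]; exact: mx_continuous_vec_mx.
apply: closed_forall => x; apply: closed_le_fun; first exact: cst_continuous.
exact/continuous_qform/mx_continuous_vec_mx.
Qed.

Lemma precond_sublevel_mem H : precond_set K H -> pdmx H -> precond_obj X H <= C ->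
  precond_sublevel (mxvec H).
Proof.
move=> [psdH KH] pdH objH_le; split.
  move=> i; case: (mxvec_indexP i) => a b; rewrite mxvecE /= in_itv /= -ler_norml.
  exact: precond_obj_le_entry objH_le a b.
split; [exact/KB | by rewrite mxvecK; exact: psdH.1 |].
by rewrite mxvecK; apply: (precond_obj_le_lower pdX e_gt0 X_ge pdH objH_le).
Qed.

Lemma precond_sublevel_pdmx v : precond_sublevel v -> pdmx (vec_mx v).
Proof.
move=> [_ [_ sv v_ge]]; split=> // x x_neq0; rewrite -/(qform _ _).
apply: lt_le_trans (v_ge x); rewrite mulr_gt0 ?divr_gt0 ?qform1_gt0 //.
exact: ltr_wpDl C_ge0 ltr01.
Qed.

Lemma precond_sublevel_feasible v : precond_sublevel v -> precond_set K (vec_mx v).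
Proof.
move=> Sv; split; first exact/pdmx_psd/precond_sublevel_pdmx.
by rewrite KB vec_mxK; case: Sv => _ [].
Qed.

Lemma precond_min_exists_sublevel : exists H, is_precond_min K X H.
Proof.
have feas1 : precond_set K 1%:M by split; [exact/pdmx_psd/pdmx1 | case: wsK].
have S1 := precond_sublevel_mem feas1 (pdmx1 R n) (lexx C).
pose f v := (\det (vec_mx v))^-1 * \tr (X^T *m \adj (vec_mx v)) + \tr (vec_mx v).
have fE v : precond_sublevel v -> f v = precond_obj X (vec_mx v).
  by move=> Sv; rewrite precond_obj_adj //; exact/pdmx_unit/precond_sublevel_pdmx.
have cf : {within precond_sublevel, continuous f}.
  apply: continuous_in_subspaceT => v; rewrite inE => Sv.
  apply: precond_obj_adj_continuous_at; first exact: mx_continuous_vec_mx.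
  exact/pdmx_unit/precond_sublevel_pdmx.
have [v Sv v_min] := EVT_min_rV (ex_intro _ _ S1) precond_sublevel_compact cf.
rewrite inE in Sv; exists (vec_mx v); split.
- exact: precond_sublevel_feasible.
- exact: precond_sublevel_pdmx.
move=> H KH pdH; rewrite -fE //.
(* feasible points outside the set do worse than the identity, which lies in it *)
have [objH_le|objH_gt] := lerP (precond_obj X H) C.
  have SH := precond_sublevel_mem KH pdH objH_le.
  by have := v_min _ (mem_set SH); rewrite (fE _ SH) mxvecK.
apply: le_trans (ltW objH_gt); have := v_min _ (mem_set S1).
by rewrite (fE _ S1) mxvecK.
Qed.

End PrecondExists.

Lemma P_H_min (R : realType) n (K : set 'M[R]_n) (X : 'M[R]_n) :
  well_structured_K K -> pdmx X -> is_precond_min K X (P_H K X).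
Proof.
move=> wsK pdX; apply: xgetPex.
have [e e_gt0 X_ge] := pdmx_lower_bound pdX.
have [KZ KD _ K1] := wsK; have K0 : K 0 by rewrite -(scale0r 1%:M); exact: KZ.
have [B KB] := subspace_mxvec_span K0 KZ KD.
exact: precond_min_exists_sublevel wsK KB pdX e_gt0 X_ge.
Qed.

Unset Implicit Arguments.
Local Close Scope classical_set_scope.

Theorem lemmaA6 (R : realType) (d : nat) (K : set 'M[R]_d) :
  well_structured_K K ->
  forall (X Y : 'M[R]_d) (t : R),
    pdmx X -> pdmx Y -> 0 <= t -> t <= 1 ->
    t * \tr (P_H K X) + (1 - t) * \tr (P_H K Y)
      <= \tr (P_H K (t *: X + (1 - t) *: Y)).
Proof.
move=> wsK X Y t pdX pdY t_ge0 t_le1; have [KZ _ _ _] := wsK.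
have pdZ := pdmx_convex pdX pdY t_ge0 t_le1.
have minX := P_H_min wsK pdX; have [_ _ leX] := minX.
have minY := P_H_min wsK pdY; have [_ _ leY] := minY.
have minZ := P_H_min wsK pdZ; have [KHZ pdHZ _] := minZ.
have := leX _ KHZ pdHZ; have := leY _ KHZ pdHZ; have := precond_min_value KZ pdZ minZ.
rewrite precond_obj_combl (precond_min_value KZ pdX minX) (precond_min_value KZ pdY minY).
nra.
Qed.
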